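(* Let $a,q\ge1$ be integers, let $H=(L\cup R,E(H))$ be a bipartite graph with $|L|=|R|=a$ containing no cycle of length less than $6$ (chosen with the maximum number of edges), $m=|E(H)|$, and let $G=G(E_A,E_B)$ be the directed graph constructed from $E_A,E_B\in\{0,1\}^m$ as in the context. (1) If $E_A\cap E_B\neq\emptyset$ (i.e. there is $j$ with $E_A[j]=E_B[j]=1$), then the girth of $G$ equals $2q$. (2) If $E_A\cap E_B=\emptyset$, then the girth of $G$ is at least $6q$.
   Context: Fix an ordering $E(H)=\{e_1,\dots,e_m\}$ with each $e_j=(l,r)$, $l\in L$, $r\in R$. The graph $G(E_A,E_B)$: for each $i\in\{1,\dots,q\}$ make a copy $l_i$ of every $l\in L$ and a copy $r_i$ of every $r\in R$ (layer $i$ is $L_i\cup R_i$). Pipes: for every $r\in R$ the directed path $r_1\to r_2\to\dots\to r_q$, and for every $l\in L$ the directed path $l_q\to l_{q-1}\to\dots\to l_1$. Input-dependent edges: for each $j$ with $e_j=(l,r)$, if $E_A[j]=1$ add the directed edge $(l_1,r_1)$, and if $E_B[j]=1$ add the directed edge $(r_q,l_q)$. Shortcut tree: a balanced binary tree $T$ with $q$ leaves $t_1,\dots,t_q$, tree edges oriented toward the leaves, plus a directed edge from every vertex of $L_i\cup R_i$ to $t_i$ for each $i$. The girth of $G$ is the length of a shortest directed cycle. *)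

From mathcomp Require Import all_boot.
Set Implicit Arguments. Unset Strict Implicit. Unset Printing Implicit Defensive.

Definition Hadj (a : nat) (H : {set 'I_a * 'I_a}) : rel ('I_a + 'I_a) :=
  fun u v => match u, v with
  | inl l, inr r => (l, r) \in H
  | inr r, inl l => (l, r) \in H
  | _, _ => false
  end.

Definition no_short_cycle (a : nat) (H : {set 'I_a * 'I_a}) : Prop :=
  forall c : seq ('I_a + 'I_a), 3 <= size c -> ucycle (Hadj H) c -> 6 <= size c.

(* Vertices: l_i (inl (inl (i,l))), r_i (inl (inr (i,r))) with 0-based layer
   index i : 'I_q (layer i+1 of the paper), and the nodes of the balanced
   binary tree T in heap layout: node k : 'I_(2q-1) has children 2k+1, 2k+2;
   the leaves are the nodes q-1, ..., 2q-2, leaf t_(i+1) being node q-1+i. *)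
Definition gvert (q a : nat) : finType :=
  (('I_q * 'I_a) + ('I_q * 'I_a) + 'I_(2 * q).-1)%type.

Definition Gadj (q a m : nat) (e : 'I_m -> 'I_a * 'I_a) (EA EB : 'I_m -> bool)
  : rel (gvert q a) :=
  fun u v => match u, v with
  (* pipe r_1 -> r_2 -> ... -> r_q *)
  | inl (inr (i, r)), inl (inr (i', r')) => (r == r') && (i' == i.+1 :> nat)
  (* pipe l_q -> l_(q-1) -> ... -> l_1 *)
  | inl (inl (i, l)), inl (inl (i', l')) => (l == l') && (i == i'.+1 :> nat)
  (* E_A edges (l_1, r_1) *)
  | inl (inl (i, l)), inl (inr (i', r)) =>
      [&& (i == 0 :> nat), (i' == 0 :> nat) & [exists j, (e j == (l, r)) && EA j]]
  (* E_B edges (r_q, l_q) *)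
  | inl (inr (i, r)), inl (inl (i', l)) =>
      [&& (i == q.-1 :> nat), (i' == q.-1 :> nat) & [exists j, (e j == (l, r)) && EB j]]
  | inr k, inr k' => (k' == k.*2.+1 :> nat) || (k' == k.*2.+2 :> nat)
  | inl (inl (i, _)), inr k => (k == q.-1 + i :> nat)
  | inl (inr (i, _)), inr k => (k == q.-1 + i :> nat)
  | inr _, inl _ => false
  end.

Definition has_dicycle_of_length (T : finType) (g : rel T) (n : nat) : Prop :=
  exists c : seq T, [/\ c != [::], ucycle g c & size c = n].

Definition girth_is (T : finType) (g : rel T) (n : nat) : Prop :=
  has_dicycle_of_length g n /\ forall k, has_dicycle_of_length g k -> n <= k.

(* girth is at least n (vacuous if g is acyclic, girth = infinity) *)
Definition girth_at_least (T : finType) (g : rel T) (n : nat) : Prop :=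
  forall k, has_dicycle_of_length g k -> n <= k.

From mathcomp Require Import all_boot zify.
Set Implicit Arguments. Unset Strict Implicit. Unset Printing Implicit Defensive.

(* A directed cycle of G never enters the tree T, whose edges only lead deeper into T.
   On the layers, give r_i the phase i-1 and l_i the phase 2q-i: every edge raises the
   phase by one modulo 2q, so cycles have length 2qt.  Along a cycle the vertex of H
   being copied stays the same except at the E_B step (phase q-1 to q) and at the E_A
   step (phase 2q-1 to 0).  Hence a cycle of length 2q uses an E_B edge and an E_A edge
   with the same endpoints, impossible when E_A and E_B are disjoint, and a cycle of
   length 4q traces a 4-cycle l0 r0 l1 r1 in H, impossible as H has girth at least 6.
   Conversely an edge (l, r) in both E_A and E_B closes the cycle
   r_1 -> ... -> r_q -> l_q -> ... -> l_1 -> r_1 of length 2q. *)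

Lemma cycle_nthP (T : eqType) (r : rel T) (x0 : T) (c : seq T) :
  cycle r c <-> (forall i, i < size c -> r (nth x0 c i) (nth x0 c (i.+1 %% size c))).
Proof.
case: c => [|x p] //=; rewrite -cats1.
have nth_next i : i < (size p).+1 ->
    nth x0 (p ++ [:: x]) i = nth x0 (x :: p) (i.+1 %% (size p).+1).
  move=> lt_i; rewrite nth_cat; case: (ltnP i (size p)) => [lt_ip | ge_ip].
    by rewrite modn_small.
  have -> : i = size p by lia.
  by rewrite subnn modnn.
have nth_cur i : i < (size p).+1 -> nth x0 (x :: p ++ [:: x]) i = nth x0 (x :: p) i.
  by move=> lt_i; rewrite -cat_cons nth_cat /= lt_i.
split=> [/(pathP x0) c_path i lt_i | c_nth].
  by rewrite -nth_next // -nth_cur //; apply: c_path; rewrite size_cat addn1.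
apply/(pathP x0) => i; rewrite size_cat addn1 => lt_i.
by rewrite nth_cur // nth_next //; apply: c_nth.
Qed.

Lemma no_short_cycle_C4 a (H : {set 'I_a * 'I_a}) (l0 l1 r0 r1 : 'I_a) :
  no_short_cycle H -> l0 != l1 -> r0 != r1 ->
  (l0, r0) \in H -> (l1, r0) \in H -> (l1, r1) \in H -> (l0, r1) \in H -> False.
Proof.
move=> H_C6 l01 r01 H00 H10 H11 H01.
have /H_C6 : ucycle (Hadj H) [:: inl l0; inr r0; inl l1; inr r1].
  rewrite /ucycle /= H00 H10 H11 H01 !inE /= andbT orbF.
  by apply/andP; split; [apply: contra l01 | apply: contra r01] => /eqP[->].
by move/(_ isT).
Qed.

Section LayeredGraph.
Variables (q a m : nat) (e : 'I_m -> 'I_a * 'I_a) (EA EB : 'I_m -> bool).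
Local Notation G := (@Gadj q a m e EA EB).
Local Notation LV := ('I_q * 'I_a + 'I_q * 'I_a)%type.

Lemma tree_edge k v : G (inr k) v -> exists2 k', v = inr k' & k < k'.
Proof. by case: v => [//|k'] /orP[] /eqP k'E; exists k' => //; rewrite k'E; lia. Qed.

Lemma tree_path k s :
  path G (inr k) s -> {in s, forall v : gvert q a, exists2 k', v = inr k' & k < k'}.
Proof.
elim: s k => [//|v s IHs] k /= /andP[/tree_edge[k' -> lt_kk'] /IHs k'_s] u.
rewrite inE => /predU1P[-> | /k'_s[k'' -> lt_k'k'']]; first by exists k'.
by exists k'' => //; apply: ltn_trans lt_k'k''.
Qed.

Definition layer_vertex (v : gvert q a) : option LV := if v is inl u then Some u else None.

Lemma cycle_in_layers c : cycle G c -> c = map inl (pmap layer_vertex c).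
Proof.
move=> c_cyc; rewrite pmap_filter; last by case.
apply/esym/all_filterP/allP => -[//|k] k_c; exfalso.
case/splitPr: k_c c_cyc => p1 p2; rewrite cycle_catC /= => c_path.
have : inr k \in rcons (p2 ++ p1) (inr k) by rewrite mem_rcons mem_head.
by case/(tree_path c_path) => k' [->]; rewrite ltnn.
Qed.

Definition layer_rel : rel LV := relpre inl G.

Definition phase (u : LV) : nat :=
  match u with inr (i, _) => i | inl (i, _) => q + (q.-1 - i) end.

Definition label (u : LV) : 'I_a := match u with inl (_, x) | inr (_, x) => x end.

Lemma phase_lt u : phase u < q.*2.
Proof. by case: u => -[i x] /=; have := ltn_ord i; lia. Qed.

Lemma phase_edge u v : layer_rel u v -> phase v = (phase u).+1 %% q.*2.
Proof.
have := phase_lt u; rewrite leq_eqVlt => /predU1P[u_last | u_lt];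
  [rewrite u_last modnn; move: u_last | rewrite modn_small //; move: u_lt];
  by case: u v => -[i x] [] [i' y]; rewrite /layer_rel /=;
     have := ltn_ord i; have := ltn_ord i'; lia.
Qed.

Lemma label_edge u v : layer_rel u v -> phase u \notin [:: q.-1; q.*2.-1] -> label v = label u.
Proof.
case: u v => -[i x] [] [i' y]; rewrite /layer_rel /= !inE; have := ltn_ord i; have := ltn_ord i';
  by [lia | move=> _ _ /andP[/eqP]].
Qed.

Lemma EB_edge u v :
  layer_rel u v -> phase u = q.-1 -> exists2 j, EB j & e j = (label v, label u).
Proof.
case: u v => -[i x] [] [i' y]; rewrite /layer_rel /=; have := ltn_ord i; have := ltn_ord i';
  try lia.
by move=> _ _ /and3P[_ _ /existsP[j /andP[/eqP ej EBj]]] _; exists j.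
Qed.

Lemma EA_edge u v :
  layer_rel u v -> phase u = q.*2.-1 -> exists2 j, EA j & e j = (label u, label v).
Proof.
case: u v => -[i x] [] [i' y]; rewrite /layer_rel /=; have := ltn_ord i; have := ltn_ord i';
  try lia.
by move=> _ _ /and3P[_ _ /existsP[j /andP[/eqP ej EAj]]] _; exists j.
Qed.

Lemma phase_label_inj u v : phase u = phase v -> label u = label v -> u = v.
Proof.
case: u v => -[i x] [] [i' y] /=; have := ltn_ord i; have := ltn_ord i'; try lia.
all: by move=> ? ? ? ->; do 2 f_equal; apply: val_inj => /=; lia.
Qed.

Hypothesis q_gt0 : 0 < q.

Section ClosedWalk.
Variable w : nat -> LV.
Hypothesis w_walk : forall j, layer_rel (w j) (w j.+1).

Lemma walk_phase j : phase (w j) = (phase (w 0) + j) %% q.*2.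
Proof.
elim: j => [|j IHj]; first by rewrite addn0 modn_small ?phase_lt.
by rewrite (phase_edge (w_walk j)) IHj -addn1 modnDml addn1 addnS.
Qed.

Lemma walk_label s j : (forall i, i < j -> phase (w (s + i)) \notin [:: q.-1; q.*2.-1]) ->
  label (w (s + j)) = label (w s).
Proof.
elim: j => [|j IHj] pipe; first by rewrite addn0.
by rewrite addnS (label_edge (w_walk _)) ?pipe // IHj // => i /ltnW; apply: pipe.
Qed.

(* Block [t] of such a walk is its steps [t*2q + i], [i < 2q]: on the pipe of some [r]
   for [i < q], on the pipe of some [l] for [q <= i]. *)
Hypothesis w_phase : forall j, phase (w j) = j %% q.*2.

Lemma phase_block t i : i < q.*2 -> phase (w (t * q.*2 + i)) = i.
Proof. by move=> lt_i; rewrite w_phase modnMDl modn_small. Qed.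

Lemma EB_block t :
  exists2 j, EB j & e j = (label (w (t * q.*2 + q)), label (w (t * q.*2))).
Proof.
have [|j EBj ej] := EB_edge (w_walk (t * q.*2 + q.-1)); first by rewrite phase_block; lia.
exists j => //; rewrite ej walk_label; last by move=> i lt_i; rewrite phase_block ?inE; lia.
by rewrite -addnS prednK.
Qed.

Lemma EA_block t :
  exists2 j, EA j & e j = (label (w (t * q.*2 + q)), label (w (t.+1 * q.*2))).
Proof.
have [|j EAj ej] := EA_edge (w_walk (t * q.*2 + q + q.-1)).
  by rewrite -addnA phase_block; lia.
exists j => //; rewrite ej walk_label; last by move=> i lt_i; rewrite -addnA phase_block ?inE; lia.
by rewrite (_ : _.+1 = t.+1 * q.*2) //; lia.
Qed.

End ClosedWalk.

Lemma dicycle_walk c : c != [::] -> cycle layer_rel c -> uniq c ->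
  exists w : nat -> LV, [/\ forall j, layer_rel (w j) (w j.+1),
    forall j, w (j + size c) = w j, {in gtn (size c) &, injective w}
    & forall j, phase (w j) = j %% q.*2].
Proof.
case: c => [//|u0 s] _; set c := u0 :: s; set n := size c => c_cyc c_uniq.
have n_gt0 : 0 < n by [].
pose y j := nth u0 c (j %% n).
have y_walk j : layer_rel (y j) (y j.+1).
  have := (cycle_nthP layer_rel u0 c).1 c_cyc _ (ltn_pmod j n_gt0).
  by rewrite /y -addn1 modnDml addn1.
pose d := q.*2 - phase u0.
exists (fun j => y (d + j)); split.
- by move=> j; rewrite addnS.
- by move=> j; rewrite /y addnA modnDr.
- move=> i j; rewrite !inE => lt_i lt_j /eqP.
  rewrite /y nth_uniq ?ltn_pmod // eqn_modDl !modn_small //; exact/eqP.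
- move=> j; rewrite (walk_phase y_walk) /y mod0n /= addnA subnKC ?modnDl //.
  exact: ltnW (phase_lt u0).
Qed.

Lemma dicycle_size_dvd c : cycle layer_rel c -> uniq c -> q.*2 %| size c.
Proof.
have [-> //| c_nz c_cyc c_uniq] := eqVneq c [::].
have [w [_ w_per _ w_phase]] := dicycle_walk c_nz c_cyc c_uniq.
by rewrite /dvdn -w_phase -(add0n (size c)) w_per w_phase mod0n.
Qed.

Lemma dicycle_size_neq_2q c : injective e -> (forall j, ~~ (EA j && EB j)) ->
  cycle layer_rel c -> uniq c -> size c != q.*2.
Proof.
move=> e_inj EAB_disj c_cyc c_uniq; apply/eqP => size_c.
have c_nz : c != [::] by rewrite -size_eq0 size_c double_eq0 -lt0n.
have [w [w_walk w_per _ w_phase]] := dicycle_walk c_nz c_cyc c_uniq.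
have [j EBj ej] := EB_block w_walk w_phase 0.
have [k EAk ek] := EA_block w_walk w_phase 0.
have /e_inj j_k : e j = e k.
  by rewrite ej ek !mul0n mul1n -size_c -(add0n (size c)) w_per.
by have := EAB_disj j; rewrite EBj andbT j_k EAk.
Qed.

Lemma dicycle_size_neq_4q (H : {set 'I_a * 'I_a}) c :
  no_short_cycle H -> (forall j, e j \in H) ->
  cycle layer_rel c -> uniq c -> size c != 2 * q.*2.
Proof.
move=> H_C6 e_H c_cyc c_uniq; apply/eqP => size_c.
have c_nz : c != [::] by rewrite -size_eq0 size_c; lia.
have [w [w_walk w_per w_inj w_phase]] := dicycle_walk c_nz c_cyc c_uniq.
pose r t := label (w (t * q.*2)); pose l t := label (w (t * q.*2 + q)).
have distinct i : i < q.*2 -> label (w i) != label (w (q.*2 + i)).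
  move=> lt_i; apply/negP => /eqP same_label.
  have same_phase : phase (w i) = phase (w (q.*2 + i)) by rewrite !w_phase modnDl.
  have := w_inj i (q.*2 + i); rewrite !inE size_c.
  by move/(_ _ _ (phase_label_inj same_phase same_label)); lia.
have [j1 _ e1] := EB_block w_walk w_phase 0.
have [j2 _ e2] := EA_block w_walk w_phase 0.
have [j3 _ e3] := EB_block w_walk w_phase 1.
have [j4 _ e4] := EA_block w_walk w_phase 1.
have r2 : r 2 = r 0 by rewrite /r mul0n -size_c -(add0n (size c)) w_per.
apply: (@no_short_cycle_C4 _ H (l 0) (l 1) (r 0) (r 1)) => //.
- by rewrite /l mul0n mul1n add0n; apply: distinct; lia.
- by rewrite /r mul0n mul1n -[q.*2]addn0; apply: distinct; lia.
- by rewrite -e1 e_H.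
- by rewrite -r2 -e4 e_H.
- by rewrite -e3 e_H.
- by rewrite -e2 e_H.
Qed.

Lemma dicycle_2q j : EA j -> EB j -> exists c, [/\ cycle layer_rel c, uniq c & size c = q.*2].
Proof.
move=> EAj EBj; pose i0 := Ordinal q_gt0.
(* [f] runs up the pipe of [r] and down the pipe of [l], where [e j = (l, r)]. *)
pose f p : LV :=
  if p < q then inr (insubd i0 p, (e j).2) else inl (insubd i0 (q.*2.-1 - p), (e j).1).
have phase_f p : p < q.*2 -> phase (f p) = p.
  by rewrite /f; case: ifP => /= lt_p lt_p2; rewrite val_insubd; case: ifP; lia.
have EBe : [exists k, (e k == ((e j).1, (e j).2)) && EB k].
  by apply/existsP; exists j; rewrite -surjective_pairing eqxx.
have EAe : [exists k, (e k == ((e j).1, (e j).2)) && EA k].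
  by apply/existsP; exists j; rewrite -surjective_pairing eqxx.
have f_uniq : uniq (mkseq f q.*2).
  rewrite map_inj_in_uniq ?iota_uniq // => x y; rewrite !mem_iota !add0n.
  by move=> /andP[_ /phase_f fx] /andP[_ /phase_f fy] /(congr1 phase); rewrite fx fy.
have f_cycle : cycle layer_rel (mkseq f q.*2).
  apply/(cycle_nthP _ (f 0)) => p; rewrite size_mkseq => lt_p.
  rewrite !nth_mkseq ?ltn_pmod ?double_gt0 //.
  have -> : p.+1 %% q.*2 = if p.+1 == q.*2 then 0 else p.+1.
    by case: eqP => [-> | ?]; rewrite ?modnn // modn_small //; lia.
  rewrite /f; case: eqP => ?; do 2 case: ifP => ?;
    rewrite /layer_rel /= ?val_insubd; do ? case: ifP => ?;
    by rewrite ?eqxx ?EBe ?EAe /=; lia.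
by exists (mkseq f q.*2); rewrite size_mkseq.
Qed.

Lemma dicycle_layersP n : has_dicycle_of_length G n <->
  exists c, [/\ c != [::], cycle layer_rel c, uniq c & size c = n].
Proof.
have inl_inj : injective (@inl LV 'I_(2 * q).-1) by move=> u v [].
split=> [[c [c_nz /andP[c_cyc c_uniq] <-]] | [c [c_nz c_cyc c_uniq <-]]].
  have [c' c_eq] : exists c', c = map inl c' by eexists; apply: cycle_in_layers.
  subst c; exists c'; split; last by rewrite size_map.
  - by move: c_nz; rewrite -!size_eq0 size_map.
  - by rewrite -cycle_map.
  - by rewrite -(map_inj_uniq inl_inj).
exists (map inl c); split; last by rewrite size_map.
  by rewrite -size_eq0 size_map size_eq0.
by rewrite /ucycle cycle_map map_inj_uniq ?c_cyc.
Qed.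

End LayeredGraph.

Theorem mainTheorem6 (a q m : nat) (H : {set 'I_a * 'I_a})
    (e : 'I_m -> 'I_a * 'I_a) (EA EB : 'I_m -> bool) :
  0 < a -> 0 < q ->
  no_short_cycle H ->
  (forall H' : {set 'I_a * 'I_a}, no_short_cycle H' -> #|H'| <= #|H|) ->
  m = #|H| -> injective e -> (forall j, e j \in H) ->
  ((exists j, EA j && EB j) -> girth_is (@Gadj q a m e EA EB) (2 * q)) /\
  ((forall j, ~~ (EA j && EB j)) -> girth_at_least (@Gadj q a m e EA EB) (6 * q)).
Proof.
move=> _ q_gt0 H_C6 _ _ e_inj e_H; rewrite mul2n.
split=> [[j /andP[EAj EBj]] | EAB_disj n /dicycle_layersP[c [c_nz c_cyc c_uniq <-]]].
  split=> [|n /dicycle_layersP[c [c_nz c_cyc c_uniq <-]]].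
    have [c [c_cyc c_uniq size_c]] := dicycle_2q e q_gt0 EAj EBj.
    by apply/dicycle_layersP; exists c; rewrite -size_eq0 size_c double_eq0 -lt0n.
  by apply: dvdn_leq (dicycle_size_dvd c_cyc c_uniq); rewrite lt0n size_eq0.
have /dvdnP[t size_c] := dicycle_size_dvd c_cyc c_uniq.
have := dicycle_size_neq_2q q_gt0 e_inj EAB_disj c_cyc c_uniq.
have := dicycle_size_neq_4q q_gt0 H_C6 e_H c_cyc c_uniq.
move: c_nz; rewrite -size_eq0 size_c; case: t {size_c} => [|[|[|t]]]; lia.
Qed.
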